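(* Let $(G_k)_{k\in\mathbb Z}$ be a gibonacci sequence and let $F_k$ denote the Fibonacci numbers. Let $r$, $n$, $t$, $m$ be integers with $r\ge1$, $n\ge 1$, such that $G_k\neq0$ for all $k$ with $t+1\le k\le n+t+r$. Then \begin{equation*} F_r \sum_{j = 1}^n \frac{(-1)^{rj} F_m^{n - j} F_{m - r}^{j - 1} G_{j + t + m}}{G_{j + t} G_{j + t + 1} \cdots G_{j + t + r}} = \frac{(-1)^{r(n - 1) + 1} F_{m - r}^n}{G_{n + t + 1} G_{n + t + 2} \cdots G_{n + t + r}} + \frac{(-1)^r F_m^n}{G_{t + 1} G_{t + 2} \cdots G_{t + r}}. \end{equation*}
   Context: A gibonacci sequence $(G_k)_{k\in\mathbb Z}$ is defined by arbitrary initial values $G_0=a$, $G_1=b$ (numbers, not both zero) and $G_k=G_{k-1}+G_{k-2}$ for all integers $k$. The Fibonacci numbers $F_k$ are the gibonacci sequence with $F_0=0$, $F_1=1$, extended to all integer indices by the same recurrence. The convention $0^0=1$ is used for powers. *)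

From mathcomp Require Import all_boot all_order all_algebra.
Set Implicit Arguments. Unset Strict Implicit. Unset Printing Implicit Defensive.
Import Order.TTheory GRing.Theory Num.Theory.
Local Open Scope ring_scope.

Section Gib.
Variable R : numFieldType.

Fixpoint gfwd (a b : R) (n : nat) : R * R :=
  match n with
  | 0%N => (a, b)
  | n'.+1 => let p := gfwd a b n' in (p.2, p.1 + p.2)
  end.

(* backward iteration: gbwd a b n = (G_{-n}, G_{-n+1}), using G_{k-2} = G_k - G_{k-1} *)
Fixpoint gbwd (a b : R) (n : nat) : R * R :=
  match n with
  | 0%N => (a, b)
  | n'.+1 => let p := gbwd a b n' in (p.2 - p.1, p.1)
  end.

Definition gib (a b : R) (k : int) : R :=
  match k with
  | Posz n => (gfwd a b n).1
  | Negz n => (gbwd a b n.+1).1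
  end.

Definition fib (k : int) : R := gib 0 1 k.

End Gib.

From mathcomp Require Import all_boot all_order all_algebra.
From mathcomp Require Import zify ring.
Import Order.TTheory GRing.Theory Num.Theory.
Local Open Scope ring_scope.

(* A sequence satisfying the Fibonacci recurrence is determined by two
   consecutive values, so G_(x+j) = G_(x+1) F_j + G_x F_(j-1) (both sides are
   gibonacci in j).  Together with an induction on r this gives d'Ocagne's
   identity F_m G_(x+r) - F_r G_(x+m) = (-1)^r F_(m-r) G_x.  Dividing it by
   G_x G_(x+1) ... G_(x+r) splits the j-th summand into the difference of two
   consecutive terms (-1)^(r j) F_m^(n-j+1) F_(m-r)^(j-1) / (G_(j+t) ... G_(j+t+r-1)),
   so the sum telescopes. *)

Lemma int_ind2 (P : int -> Prop) :
  P 0 -> P 1 ->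
  (forall k, P k -> P (k + 1) -> P (k + 2)) ->
  (forall k, P (k + 1) -> P (k + 2) -> P k) ->
  forall k, P k.
Proof.
move=> P0 P1 Pfwd Pbwd.
have Pnat (n : nat) : P n%:Z /\ P (n%:Z + 1).
  elim: n => [|n [Pn Pn1]]; first by [].
  have -> : n.+1%:Z = n%:Z + 1 by lia.
  by split; last by rewrite -addrA; apply: Pfwd.
have Pneg (n : nat) : P (- n%:Z) /\ P (- n%:Z + 1).
  elim: n => [|n [Pn Pn1]]; first by [].
  have e1 : - n.+1%:Z + 1 = - n%:Z by lia.
  have e2 : - n.+1%:Z + 2 = - n%:Z + 1 by lia.
  by split; [apply: Pbwd; rewrite ?e1 ?e2 | rewrite e1].
by case=> n; [case: (Pnat n) | rewrite NegzE; case: (Pneg n.+1)].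
Qed.

Section Gibonacci.
Context {R : numFieldType}.
Implicit Types (a b : R) (u v : int -> R) (c j k m x y : int).

Definition is_gibonacci u := forall k, u (k + 2) = u (k + 1) + u k.

Lemma gib_is_gibonacci a b : is_gibonacci (gib a b).
Proof.
case=> [n|[|[|n]]].
- have -> : n%:Z + 2 = n.+2%:Z by lia.
  have -> : n%:Z + 1 = n.+1%:Z by lia.
  by rewrite /gib /= addrC.
- by rewrite /gib /= [RHS]addrC subrK.
- by rewrite /gib /= [RHS]addrC subrK.
- have -> : Negz n.+2 + 2 = Negz n by rewrite !NegzE; lia.
  have -> : Negz n.+2 + 1 = Negz n.+1 by rewrite !NegzE; lia.
  by rewrite /gib /= [RHS]addrC subrK.
Qed.

Lemma gibonacci_eq_gib {u} : is_gibonacci u -> forall k, u k = gib (u 0) (u 1) k.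
Proof.
move=> uS; elim/int_ind2 => // k IH0 IH1.
- by rewrite uS gib_is_gibonacci IH0 IH1.
- by apply: (addrI (u (k + 1))); rewrite -uS IH0 IH1 gib_is_gibonacci.
Qed.

Lemma is_gibonacci_shift {u} c : is_gibonacci u -> is_gibonacci (fun k => u (k + c)).
Proof. by move=> uS k; rewrite addrAC uS addrAC. Qed.

Lemma is_gibonacci_lin {u v} (x y : R) :
  is_gibonacci u -> is_gibonacci v -> is_gibonacci (fun k => x * u k + y * v k).
Proof. by move=> uS vS k; rewrite uS vS; ring. Qed.

Lemma gib_fib a b k : gib a b k = b * fib R k + a * fib R (k - 1).
Proof.
have vS := is_gibonacci_lin b a (gib_is_gibonacci 0 1)
  (is_gibonacci_shift (-1) (gib_is_gibonacci 0 1)).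
by rewrite [RHS](gibonacci_eq_gib vS) /= subr0 !mulr0 !mulr1 add0r addr0.
Qed.

Lemma gib_addr a b x j :
  gib a b (x + j) = gib a b (x + 1) * fib R j + gib a b x * fib R (j - 1).
Proof.
have uS : is_gibonacci (fun j => gib a b (j + x)) by apply/is_gibonacci_shift/gib_is_gibonacci.
by rewrite addrC (gibonacci_eq_gib uS) gib_fib /= add0r [1 + x]addrC.
Qed.

Lemma gibS a b k : gib a b (k + 1) = gib a b k + gib a b (k - 1).
Proof. by rewrite -[k in LHS](subrK 1) -addrA gib_is_gibonacci subrK. Qed.

Lemma fib_docagne (r : nat) m :
  fib R m * fib R (r%:Z - 1) - fib R r%:Z * fib R (m - 1) = (-1) ^+ r * fib R (m - r%:Z).
Proof.
elim: r m => [|r IH] m.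
  have fib_neg1 : fib R (-1) = 1 by rewrite /fib /gib /= subr0.
  by rewrite sub0r subr0 fib_neg1 mulr1 mul0r subr0 expr0 mul1r.
have fibS k : fib R (k + 1) = fib R k + fib R (k - 1) := gibS 0 1 k.
have -> : r.+1%:Z = r%:Z + 1 by lia.
rewrite addrK fibS opprD addrA [m - _ - _]addrAC exprS -mulrA -IH.
by rewrite -[in fib R m](subrK 1 m) fibS; ring.
Qed.

Lemma gib_docagne a b (r : nat) m x :
  fib R m * gib a b (x + r%:Z) - fib R r%:Z * gib a b (x + m)
  = (-1) ^+ r * fib R (m - r%:Z) * gib a b x.
Proof.
by rewrite (gib_addr a b x r) (gib_addr a b x m) -fib_docagne; ring.
Qed.

Definition gib_prod a b (r : nat) x := \prod_(i < r) gib a b (x + i%:Z).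

Lemma gib_prodSl a b (r : nat) x :
  gib_prod a b r.+1 x = gib a b x * gib_prod a b r (x + 1).
Proof.
rewrite /gib_prod big_ord_recl addr0; congr (_ * _).
by apply: eq_bigr => i _; rewrite lift0 intS addrA.
Qed.

Lemma gib_prodSr a b (r : nat) x :
  gib_prod a b r.+1 x = gib_prod a b r x * gib a b (x + r%:Z).
Proof. by rewrite /gib_prod big_ord_recr. Qed.

Lemma gib_partial_fraction a b (r : nat) m x :
  gib_prod a b r.+1 x != 0 ->
  fib R r%:Z * gib a b (x + m) / gib_prod a b r.+1 x
  = fib R m / gib_prod a b r x - (-1) ^+ r * fib R (m - r%:Z) / gib_prod a b r (x + 1).
Proof.
move=> P_neq0.
have docagne : fib R r%:Z * gib a b (x + m)
               = fib R m * gib a b (x + r%:Z) - (-1) ^+ r * fib R (m - r%:Z) * gib a b x.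
  by rewrite -gib_docagne; ring.
rewrite docagne mulrBl; congr (_ - _).
- move: P_neq0; rewrite gib_prodSr mulf_eq0 negb_or => /andP[Q0 Gr].
  by field; apply/andP.
- move: P_neq0; rewrite gib_prodSl mulf_eq0 negb_or => /andP[G0 Q1].
  by field; apply/andP.
Qed.

Lemma gib_sum_telescope a b (r n : nat) m y :
  (forall k : nat, (k < n)%N -> gib_prod a b r.+1 (y + k%:Z) != 0) ->
  fib R r%:Z * \sum_(0 <= k < n)
      ((-1) ^+ (r * k.+1) * fib R m ^+ (n - k.+1) * fib R (m - r%:Z) ^+ k
         * gib a b (y + k%:Z + m) / gib_prod a b r.+1 (y + k%:Z))
  = (-1) ^+ r * fib R m ^+ n / gib_prod a b r y
    - (-1) ^+ (r * n.+1) * fib R (m - r%:Z) ^+ n / gib_prod a b r (y + n%:Z).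
Proof.
move=> P_neq0.
pose U (k : nat) := (-1) ^+ (r * k.+1) * fib R m ^+ (n - k) * fib R (m - r%:Z) ^+ k
                    / gib_prod a b r (y + k%:Z).
rewrite mulr_sumr (telescope_sumr_eq (fun k : nat => - U k)) //.
  by rewrite /U addr0 subn0 subnn muln1 !expr0; ring.
move=> k /andP[_ lt_kn]; rewrite opprK [RHS]addrC /U.
have -> : (n - k = (n - k.+1).+1)%N by lia.
have -> : y + k.+1%:Z = y + k%:Z + 1 by lia.
transitivity ((-1) ^+ (r * k.+1) * fib R m ^+ (n - k.+1) * fib R (m - r%:Z) ^+ k
              * (fib R r%:Z * gib a b (y + k%:Z + m) / gib_prod a b r.+1 (y + k%:Z))).
  by ring.
by rewrite gib_partial_fraction ?P_neq0 // [(r * k.+2)%N]mulnS exprD !exprS; ring.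
Qed.

End Gibonacci.

Theorem mainTheorem8 (R : numFieldType) (a b : R) (r n : nat) (t m : int) :
  ~ (a = 0 /\ b = 0) ->
  (1 <= r)%N -> (1 <= n)%N ->
  (forall k : int, t + 1 <= k <= n%:Z + t + r%:Z -> gib a b k != 0) ->
  fib R r%:Z *
    \sum_(1 <= j < n.+1)
      ((-1) ^+ (r * j) * fib R m ^+ (n - j) * fib R (m - r%:Z) ^+ (j - 1)
         * gib a b (j%:Z + t + m)
       / \prod_(i < r.+1) gib a b (j%:Z + t + i%:Z))
  = (-1) ^+ (r * (n - 1) + 1) * fib R (m - r%:Z) ^+ n
      / \prod_(1 <= i < r.+1) gib a b (n%:Z + t + i%:Z)
    + (-1) ^+ r * fib R m ^+ n
      / \prod_(1 <= i < r.+1) gib a b (t + i%:Z).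
Proof.
move=> _ _ n_gt0 G_neq0.
have prod_shift x : \prod_(1 <= i < r.+1) gib a b (x + i%:Z) = gib_prod a b r (x + 1).
  by rewrite big_add1 big_mkord; apply: eq_bigr => i _; rewrite intS addrA.
have reindex (j : nat) : j.+1%:Z + t = t + 1 + j%:Z by lia.
rewrite !prod_shift big_add1 succnK.
under eq_bigr => j _ do rewrite subn1 succnK reindex.
rewrite gib_sum_telescope; last first.
  by move=> k lt_kn; apply/prodf_neq0 => i _; apply: G_neq0; have := ltn_ord i; lia.
have sign : (-1) ^+ (r * (n - 1) + 1) = - (-1) ^+ (r * n.+1) :> R.
  have -> : n.+1 = (n - 1 + 2)%N by lia.
  by rewrite mulnDr !exprD !exprM sqrr_sign expr1 mulr1 mulrN1.
have -> : n%:Z + t + 1 = t + 1 + n%:Z by lia.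
by rewrite sign; ring.
Qed.
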